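(* Consider the following hybrid sealed-bid auction for a single item with $n = n_A + n_B$ risk-neutral bidders. $n_A$ bidders are ''integrated'', each with a private value drawn independently from a distribution with CDF $F_A$ and density $f_A$; $n_B$ bidders are ''non-integrated'', each with a private value drawn independently from a distribution with CDF $F_B$ and density $f_B$ (all draws mutually independent, values nonnegative). All bidders simultaneously submit bids and the highest bidder wins. If the winner is integrated, it pays the second-highest bid; if the winner is non-integrated, it pays its own bid. Suppose every integrated bidder bids its true value. Let $\sigma(\cdot)$ be a strictly increasing symmetric Bayes–Nash equilibrium bidding strategy of the non-integrated bidders (a non-integrated bidder with value $v$ bids $\sigma(v)$). Then for every value $v$, $$\sigma(v) = v - \frac{\int_{0}^v F_B^{n_B-1}(t)\, F_A^{n_A}(\sigma(t))\, dt}{F_B^{n_B-1}(v)\, F_A^{n_A}(\sigma(v))}.$$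
   Context: Bidders are risk neutral with quasilinear utility (value minus payment if winning, zero otherwise). $F^k$ denotes the $k$-th power of the CDF $F$. *)

From HB Require Import structures.
From mathcomp Require Import all_boot all_order all_algebra.
From mathcomp Require Import all_classical all_reals all_analysis.
Set Implicit Arguments. Unset Strict Implicit. Unset Printing Implicit Defensive.
Import Order.TTheory GRing.Theory Num.Theory.
Local Open Scope classical_set_scope.
Local Open Scope ring_scope.

Section Auction.
Variable R : realType.

Definition is_density (f : R -> R) : Prop :=
  measurable_fun setT f /\ (forall x, 0 <= f x) /\ (forall x, x < 0 -> f x = 0) /\
  (\int[@lebesgue_measure R]_(x in [set: R]) (f x)%:E = 1)%E.

Definition CDF (f : R -> R) (x : R) : R :=
  Rintegral (@lebesgue_measure R) `]-oo, x] f.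

Definition prob_below (f : R -> R) (g : R -> R) (b : R) : R :=
  Rintegral (@lebesgue_measure R) [set t | 0 <= t /\ g t < b] f.

(* Interim expected utility of a non-integrated bidder with value v bidding b,
   when the nA integrated bidders bid truthfully (values with density fA) and
   the other nB-1 non-integrated bidders bid sigma(value) (values with density
   fB), all values independent. The bidder wins iff its bid is strictly higher
   than all other bids (ties have probability zero), and then pays its own bid. *)
Definition payoffB (fA fB : R -> R) (nA nB : nat) (sigma : R -> R) (v b : R) : R :=
  (v - b) * (prob_below fA id b) ^+ nA * (prob_below fB sigma b) ^+ (nB - 1).

Definition is_BNE_B (fA fB : R -> R) (nA nB : nat) (sigma : R -> R) : Prop :=
  forall v b : R, 0 <= v -> payoffB fA fB nA nB sigma v b <= payoffB fA fB nA nB sigma v (sigma v).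

End Auction.

(* With value b, bidding sigma a earns (b - sigma a) G(a), where G(a) is the
   probability of winning with the bid sigma a.  The equilibrium condition
   therefore says that G(a) is a subgradient at a of the equilibrium utility
   U(t) = (t - sigma t) G(t) on [0, +oo), so G is nondecreasing there.  Both U
   and t |-> int_0^t G then have increments between G(a)(b - a) and
   G(b)(b - a) on every [a, b], and two such functions differ by a constant:
   their difference moves by at most (G(v) - G(0)) v / n over a uniform
   partition of [0, v] into n pieces.  Hence U(v) = U(0) + int_0^v G, and
   U(0) = 0; solving for sigma(v) gives the formula. *)

From mathcomp Require Import all_boot all_order all_algebra.
From mathcomp Require Import all_classical all_reals all_analysis.
From mathcomp Require Import measurable_realfun lra.
Set Implicit Arguments.
Unset Strict Implicit.
Unset Printing Implicit Defensive.
Import Order.TTheory GRing.Theory Num.Theory.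
Local Open Scope classical_set_scope.
Local Open Scope ring_scope.

Section Envelope.
Variable R : realType.
Notation mu := (@lebesgue_measure R).
Implicit Types (g h F U : R -> R) (a b v : R).

Definition slope_bracket g F : Prop :=
  forall a b, 0 <= a -> a <= b -> g a * (b - a) <= F b - F a <= g b * (b - a).

Lemma slope_bracket_homo g F :
  slope_bracket g F -> {in `[0, +oo[ &, {homo g : x y / x <= y}}.
Proof.
move=> gF a b; rewrite !in_itv /= !andbT => a0 _.
rewrite le_eqVlt => /predU1P[-> // | ab].
have /andP[lo hi] := gF a b a0 (ltW ab).
by rewrite -(ler_pM2r (_ : 0 < b - a)) ?subr_gt0 // (le_trans lo hi).
Qed.

Lemma subgradient_slope_bracket g U :
  (forall a b, 0 <= a -> 0 <= b -> U a + (b - a) * g a <= U b) ->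
  slope_bracket g U.
Proof.
move=> sub a b a0 ab; have b0 := le_trans a0 ab.
have := sub a b a0 b0; have := sub b a b0 a0.
by move=> *; apply/andP; split; nra.
Qed.

Lemma le0_le_divn (x c : R) : (forall n, (0 < n)%N -> x <= c / n%:R) -> x <= 0.
Proof.
move=> xc; rewrite leNgt; apply/negP => x0.
have := xc (Num.truncn (c / x)).+1 isT.
by rewrite leNgt ltr_pdivrMr // -ltr_pdivrMl // mulrC truncnS_gt.
Qed.

Lemma slope_bracket_unique g F1 F2 v :
  slope_bracket g F1 -> slope_bracket g F2 -> 0 <= v ->
  F1 v - F1 0 = F2 v - F2 0.
Proof.
move=> gF1 gF2 v0; pose D x := F1 x - F2 x.
have stepD a b : 0 <= a -> a <= b -> `|D b - D a| <= (g b - g a) * (b - a).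
  move=> a0 ab; have /andP[? ?] := gF1 a b a0 ab; have /andP[? ?] := gF2 a b a0 ab.
  by rewrite /D ler_norml; apply/andP; split; nra.
suff : `|D v - D 0| <= 0 by rewrite normr_le0 subr_eq0 /D => /eqP; lra.
apply: (@le0_le_divn _ ((g v - g 0) * v)) => n n0.
pose x k := k%:R * (v / n%:R).
have x0 : x 0%N = 0 by rewrite /x mul0r.
have xn : x n = v by rewrite /x mulrC divfK // pnatr_eq0 -lt0n.
have xS k : x k.+1 - x k = v / n%:R by rewrite /x -mulrBl -natrB // subSnn mul1r.
have x_ge0 k : 0 <= x k by rewrite mulr_ge0 // divr_ge0.
have -> : D v - D 0 = \sum_(0 <= k < n) (D (x k.+1) - D (x k)).
  by rewrite telescope_sumr // xn x0.
apply: le_trans (ler_norm_sum _ _ _) _.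
apply: le_trans (ler_sum _ (fun k _ => stepD _ _ (x_ge0 k) _)) _.
  by move=> k _; rewrite -subr_ge0 xS divr_ge0.
under eq_bigr do rewrite xS.
by rewrite -mulr_suml telescope_sumr // xn x0 mulrA.
Qed.

Lemma nondecreasing_integrable h a b :
  {homo h : x y / x <= y} -> mu.-integrable `[a, b] (EFin \o h).
Proof.
move=> h_nd; apply: measurable_bounded_integrable => //=.
- by rewrite lebesgue_measure_itv /=; case: ifPn => // _; rewrite -EFinB ltry.
- exact: nondecreasing_measurable.
exists (`|h a| + `|h b|); split; first exact: num_real.
move=> M HM x; rewrite /= in_itv /= => /andP[ax xb]; apply: le_trans (ltW HM).
have := h_nd _ _ ax; have := h_nd _ _ xb.
have := ler_norm (h b); have := ler_norm (- h a); rewrite normrN.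
have := normr_ge0 (h a); have := normr_ge0 (h b).
by rewrite ler_norml => *; apply/andP; split; lra.
Qed.

Lemma nondecreasing_Rintegral_oc_bounds h a b :
  {homo h : x y / x <= y} -> a <= b ->
  h a * (b - a) <= \int[mu]_(t in `]a, b]) h t <= h b * (b - a).
Proof.
move=> h_nd; rewrite le_eqVlt => /predU1P[<- | ab].
  by rewrite set_itv_ge ?bnd_simp ?ltxx // Rintegral_set0 subrr !mulr0 lexx.
have int_oc : mu.-integrable `]a, b] (EFin \o h).
  apply: integrableS (nondecreasing_integrable a b h_nd) => //=.
  exact/subset_itvP/subset_itv_oc_cc.
have int_cst c : mu.-integrable `]a, b] (EFin \o fun=> c).
  apply: measurable_bounded_integrable => //=; last exact: bounded_cst.
  by rewrite lebesgue_measure_itv /= lte_fin ab -EFinB ltry.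
have mu_oc : fine (mu `]a, b]) = b - a by rewrite lebesgue_measure_itv /= lte_fin ab.
rewrite -mu_oc -!Rintegral_cst //; apply/andP; split; apply: le_Rintegral => // x;
  rewrite /= in_itv /= => /andP[ax xb]; apply: h_nd => //; exact: ltW.
Qed.

Lemma Rintegral_slope_bracket g : {in `[0, +oo[ &, {homo g : x y / x <= y}} ->
  slope_bracket g (fun x => \int[mu]_(t in `[0, x]) g t).
Proof.
move=> g_nd; pose h x := g (Num.max 0 x).
have h_nd : {homo h : x y / x <= y}.
  move=> x y xy; apply: g_nd; last exact: le_max2.
  1,2: by rewrite in_itv /= le_max lexx.
have hE x : 0 <= x -> h x = g x by move=> x0; rewrite /h max_r.
have int_gh x : \int[mu]_(t in `[0, x]) g t = \int[mu]_(t in `[0, x]) h t.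
  by apply: eq_Rintegral => t; rewrite inE /= in_itv /= => /andP[t0 _]; rewrite hE.
move=> a b a0 ab; rewrite !int_gh Rintegral_itvB ?bnd_simp //; last first.
  exact: nondecreasing_integrable.
by rewrite -(hE a) // -(hE b) ?(le_trans a0 ab) // nondecreasing_Rintegral_oc_bounds.
Qed.

Lemma envelope_formula g U v :
  (forall a b, 0 <= a -> 0 <= b -> U a + (b - a) * g a <= U b) -> 0 <= v ->
  U v - U 0 = \int[mu]_(t in `[0, v]) g t.
Proof.
move=> sub v0; have gU := subgradient_slope_bracket sub.
have gI := Rintegral_slope_bracket (slope_bracket_homo gU).
by rewrite (slope_bracket_unique gU gI v0) set_itv1 Rintegral_set1 subr0.
Qed.

End Envelope.

Section Densities.
Variable R : realType.
Notation mu := (@lebesgue_measure R).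
Implicit Types f : R -> R.

Lemma density_integrable f : is_density f -> mu.-integrable setT (EFin \o f).
Proof.
move=> [mf [f_ge0 [_ f_int1]]]; apply/integrableP; split; first exact/measurable_EFinP.
under eq_integral => x _ do rewrite /= ger0_norm //.
by rewrite f_int1 ltry.
Qed.

Lemma prob_below_id f b : is_density f -> prob_below f id b = CDF f b.
Proof.
move=> df; have [_ [_ [f_neg _]]] := df.
rewrite /CDF -Rintegral_itv_bndo_bndc; last first.
  by apply: integrableS (density_integrable df) => //=.
rewrite /prob_below Rintegral_mkcond [RHS]Rintegral_mkcond.
apply: eq_Rintegral => t _; rewrite /patch mem_setE in_itv /=.
have [t_neg | t0] := ltP t 0; first by rewrite f_neg //; case: ifP; case: ifP.
case: ifPn => [/set_mem [_ ->] // | /negP tD].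
by case: ifPn => // tb; exfalso; apply: tD; exact/mem_set.
Qed.

Lemma prob_below_ge0 f g b : is_density f -> 0 <= prob_below f g b.
Proof. by move=> [_ [f_ge0 _]]; apply: Rintegral_ge0. Qed.

Lemma CDF_ge0 f b : is_density f -> 0 <= CDF f b.
Proof. by move=> df; rewrite -prob_below_id // prob_below_ge0. Qed.

Lemma CDF_le0 f b : is_density f -> b <= 0 -> CDF f b = 0.
Proof.
move=> df b0; rewrite -prob_below_id // /prob_below.
suff -> : [set t | 0 <= t /\ id t < b] = set0 by rewrite Rintegral_set0.
apply/seteqP; split => // t /= [t0 tb].
by move: (le_lt_trans t0 (lt_le_trans tb b0)); rewrite ltxx.
Qed.

Lemma prob_below_mono f (s : R -> R) a :
  is_density f -> {in `[0, +oo[ &, {mono s : x y / x < y}} -> 0 <= a ->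
  prob_below f s (s a) = CDF f a.
Proof.
move=> df s_mono a0; rewrite -prob_below_id //; congr Rintegral.
apply/seteqP; split => t /= [t0 tb]; split => //.
  by rewrite -(s_mono t a) // !in_itv /= ?t0 ?a0.
by rewrite s_mono // !in_itv /= ?t0 ?a0.
Qed.

End Densities.

Section Equilibrium.
Variables (R : realType) (fA fB : R -> R) (nA nB : nat) (sigma : R -> R).
Hypotheses (dA : is_density fA) (dB : is_density fB).
Hypothesis sigma_mono : {in `[0, +oo[ &, {mono sigma : x y / x < y}}.
Hypothesis BNE : is_BNE_B fA fB nA nB sigma.

Definition win_prob (t : R) : R := CDF fB t ^+ (nB - 1) * CDF fA (sigma t) ^+ nA.

Definition equilibrium_utility (t : R) : R := (t - sigma t) * win_prob t.

Lemma win_prob_ge0 t : 0 <= win_prob t.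
Proof. by rewrite mulr_ge0 // exprn_ge0 // CDF_ge0. Qed.

Lemma payoffB_sigma w a :
  0 <= a -> payoffB fA fB nA nB sigma w (sigma a) = (w - sigma a) * win_prob a.
Proof.
move=> a0; rewrite /payoffB prob_below_id // prob_below_mono //.
by rewrite /win_prob mulrA mulrAC.
Qed.

Lemma BNE_subgradient a b : 0 <= a -> 0 <= b ->
  equilibrium_utility a + (b - a) * win_prob a <= equilibrium_utility b.
Proof.
move=> a0 b0; have := BNE (sigma a) b0; rewrite !payoffB_sigma //.
by rewrite /equilibrium_utility -mulrDl (addrC (a - _)) addrA subrK.
Qed.

(* Without rivals the bidder always wins, so underbidding always pays. *)
Lemma BNE_has_rival : (0 < nA)%N || (1 < nB)%N.
Proof.
rewrite lt0n -subn_gt0 lt0n; apply/contraT.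
rewrite negb_or !negbK => /andP[/eqP nA0 /eqP nB1].
have := BNE (sigma 0 - 1) (lexx 0).
rewrite /payoffB nA0 nB1 !expr0 !mulr1; lra.
Qed.

Lemma equilibrium_utility0 : equilibrium_utility 0 = 0.
Proof.
(* A negative bid never loses money; a negative equilibrium bid at value 0 only
   wins when there is no rival, which BNE_has_rival excludes. *)
apply/le_anti/andP; split; last first.
  have := BNE (-1) (lexx 0); rewrite payoffB_sigma // => /(le_trans _); apply.
  by rewrite /payoffB sub0r opprK mul1r mulr_ge0 // exprn_ge0 // prob_below_ge0.
rewrite /equilibrium_utility sub0r; have [s0 | s_neg] := leP 0 (sigma 0).
  by rewrite mulr_le0_ge0 ?oppr_le0 // win_prob_ge0.
suff -> : win_prob 0 = 0 by rewrite mulr0.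
have /orP[nA0 | nB1] := BNE_has_rival.
  by rewrite /win_prob (CDF_le0 dA (ltW s_neg)) expr0n eqn0Ngt nA0 mulr0.
by rewrite /win_prob (CDF_le0 dB (lexx 0)) expr0n subn_eq0 leqNgt nB1 mul0r.
Qed.

End Equilibrium.

Theorem mainTheorem1 (R : realType) (nA nB : nat) (fA fB : R -> R) (sigma : R -> R) :
  (1 <= nB)%N ->
  is_density fA -> is_density fB ->
  {in `[0, +oo[ &, {mono sigma : x y / x < y}} ->
  is_BNE_B fA fB nA nB sigma ->
  forall v : R, 0 <= v ->
  (CDF fB v) ^+ (nB - 1) * (CDF fA (sigma v)) ^+ nA != 0 ->
  sigma v = v - Rintegral (@lebesgue_measure R) `[0, v]
                  (fun t => (CDF fB t) ^+ (nB - 1) * (CDF fA (sigma t)) ^+ nA)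
              / ((CDF fB v) ^+ (nB - 1) * (CDF fA (sigma v)) ^+ nA).
Proof.
move=> _ dA dB sigma_mono BNE v v0 win_v.
have := envelope_formula (BNE_subgradient dA dB sigma_mono BNE) v0.
rewrite (equilibrium_utility0 dA dB sigma_mono BNE) subr0 => <-.
by rewrite /equilibrium_utility mulfK // opprB addrC subrK.
Qed.
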